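(* Suppose $0<1/n\ll \nu\ll \tau,\varepsilon<1$ and let $G$ be a digraph on $n$ vertices with $\delta^0(G)\geq n/2$. Then $G$ is $\varepsilon$-extremal or $G$ is a robust $(\nu,\tau)$-outexpander.
   Context: Digraphs have no loops and at most one edge in each direction between two vertices; $\delta^0(G)$ is the minimum over vertices of the minimum of in- and outdegree. For $X,Y\subseteq V(G)$, $E(X,Y)$ is the set of edges $xy$ with $x\in X$, $y\in Y$ and $e(X,Y)=|E(X,Y)|$. For $0<\nu\leq\tau<1$ and $S\subseteq V(G)$, the $\nu$-robust outneighbourhood $RN^+_{\nu,G}(S)$ is the set of vertices of $G$ having at least $\nu n$ inneighbours in $S$; $G$ is a robust $(\nu,\tau)$-outexpander if $|RN^+_{\nu,G}(S)|\geq |S|+\nu n$ for all $S\subseteq V(G)$ with $\tau n<|S|<(1-\tau)n$. $G$ is $\varepsilon$-extremal if there is a partition $A,B,S,T$ of $V(G)$ with sizes $a,b,s,t$ such that $|a-b|,|s-t|\leq 1$ and $e(A\cup S,A\cup T)<\varepsilon n^2$. The hierarchy notation $\alpha\ll\beta$ means the statement holds whenever $\alpha$ is sufficiently small as a function of $\beta$ (constants chosen from right to left); here $1/n\ll\nu\ll \tau,\varepsilon$ means $\nu$ is sufficiently small relative to $\tau$ and $\varepsilon$, and $n$ sufficiently large relative to $\nu$. *)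

From HB Require Import structures.
From mathcomp Require Import all_boot all_order all_algebra.
Set Implicit Arguments. Unset Strict Implicit. Unset Printing Implicit Defensive.
Import Order.TTheory GRing.Theory Num.Theory.
Local Open Scope ring_scope.

(* A digraph on the finite vertex type V is an irreflexive relation E : rel V
   (E x y means the edge xy is present); a relation has at most one edge in
   each direction automatically.  n = #|V|. *)
Definition loopless (V : finType) (E : rel V) : Prop := irreflexive E.

Definition outdeg (V : finType) (E : rel V) (v : V) : nat := #|[set u | E v u]|.
Definition indeg (V : finType) (E : rel V) (v : V) : nat := #|[set u | E u v]|.

Definition min_semideg_ge_half (R : realFieldType) (V : finType) (E : rel V) : Prop :=
  forall v : V,
    (#|V|%:R / 2%:R <= (outdeg E v)%:R :> R) /\ (#|V|%:R / 2%:R <= (indeg E v)%:R :> R).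

Definition eXY (V : finType) (E : rel V) (X Y : {set V}) : nat :=
  #|[set p : V * V | (p.1 \in X) && (p.2 \in Y) && E p.1 p.2]|.

Definition RNout (R : realFieldType) (V : finType) (E : rel V) (nu : R) (S : {set V})
  : {set V} :=
  [set v | nu * #|V|%:R <= #|[set u in S | E u v]|%:R].

Definition robust_outexpander (R : realFieldType) (V : finType) (E : rel V) (nu tau : R)
  : Prop :=
  forall S : {set V},
    tau * #|V|%:R < #|S|%:R -> #|S|%:R < (1 - tau) * #|V|%:R ->
    #|S|%:R + nu * #|V|%:R <= (#|RNout E nu S|)%:R.

Definition partition4 (V : finType) (A B S T : {set V}) : Prop :=
  [&& [disjoint A & B], [disjoint A & S], [disjoint A & T],
      [disjoint B & S], [disjoint B & T] & [disjoint S & T]]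
  /\ A :|: B :|: S :|: T = [set: V].

Definition extremal (R : realFieldType) (V : finType) (E : rel V) (eps : R) : Prop :=
  exists A B S T : {set V},
    [/\ partition4 A B S T,
        ((#|A| <= #|B| + 1)%N /\ (#|B| <= #|A| + 1)%N),
        ((#|S| <= #|T| + 1)%N /\ (#|T| <= #|S| + 1)%N)
      & (eXY E (A :|: S) (A :|: T))%:R < eps * (#|V|%:R ^+ 2)].

From HB Require Import structures.
From mathcomp Require Import all_boot all_order all_algebra.
From mathcomp Require Import zify ring lra.
Set Implicit Arguments.
Unset Strict Implicit.
Unset Printing Implicit Defensive.

Import Order.TTheory GRing.Theory Num.Theory.
Local Open Scope ring_scope.

(* Suppose tau n < |S| < (1 - tau) n but RN := RN^+_nu(S) has fewer than
   |S| + nu n vertices.  Every vertex outside RN receives fewer than nu n edges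
   from S, so e(S, V \ RN) <= nu n^2.  Counting the edges leaving S (outdegrees
   >= n/2) then gives |RN| >= n/2 - nu n / tau, and counting the edges entering
   V \ RN (indegrees >= n/2) gives |S| <= n/2 + nu n.  Trimming or padding S and
   RN to sets X, Y of sizes floor(n/2) and ceil(n/2) moves O(nu n^2 / tau) edges,
   so e(X, V \ Y) < eps n^2 once nu <= eps tau / 10; the partition
   A = X \ Y, B = Y \ X, S = X :&: Y, T = V \ (X :|: Y) has A :|: S = X and
   A :|: T = V \ Y, hence witnesses eps-extremality.  No lower bound on n is
   needed. *)

Lemma ler_natB_trunc (R : numDomainType) (a b : nat) (c : R) :
  0 <= c -> a%:R - b%:R <= c -> (a - b)%N%:R <= c.
Proof.
case: (leqP a b) => [ab c_ge0 _ | /ltnW ba _]; last by rewrite natrB.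
by move: ab; rewrite -subn_eq0 => /eqP ->.
Qed.

Lemma exists_subset_card (T : finType) (A : {set T}) m :
  (m <= #|A|)%N -> exists2 Z : {set T}, Z \subset A & #|Z| = m.
Proof.
case/card_geqP => s [s_uniq s_size sA].
exists [set x in s]; last by rewrite cardsE (card_uniqP s_uniq).
by apply/subsetP => x; rewrite inE => /sA.
Qed.

Lemma resize_set (T : finType) (X : {set T}) m : (m <= #|T|)%N ->
  exists X' : {set T},
    [/\ #|X'| = m, #|X' :\: X| = (m - #|X|)%N & #|X :\: X'| = (#|X| - m)%N].
Proof.
move=> m_le; case: (leqP #|X| m) => [X_le | m_lt]; last first.
  have [Z ZX cardZ] := exists_subset_card (ltnW m_lt).
  exists Z; split => //; last by rewrite cardsD (setIidPr ZX) cardZ.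
  by move: ZX; rewrite -setD_eq0 => /eqP ->; rewrite cards0; lia.
have [Z ZXc cardZ] : exists2 Z : {set T}, Z \subset ~: X & #|Z| = (m - #|X|)%N.
  by apply: exists_subset_card; move: (cardsC X); lia.
have XZ : X :&: Z = set0 by apply/disjoint_setI0; rewrite disjoint_sym disjoints_subset.
exists (X :|: Z); split.
- by rewrite cardsU XZ cards0 cardZ; lia.
- by rewrite setDUl setDv set0U cardsD setIC XZ cards0 subn0.
- by rewrite setDUr setDv set0I cards0; lia.
Qed.

Lemma divn2_halves n :
  [/\ (n %/ 2 + (n - n %/ 2) = n)%N, (n %/ 2 <= n - n %/ 2 <= n %/ 2 + 1)%N,
       (n %/ 2 * 2 <= n)%N & (n <= (n - n %/ 2) * 2)%N].
Proof. by split; try apply/andP; try split; lia. Qed.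

Section EdgeCounting.
Variables (V : finType) (E : rel V).

Lemma eXYE X Y : eXY E X Y =
  (\sum_(x : V) \sum_(y : V) ((x \in X) && (y \in Y) && E x y : nat))%N.
Proof.
rewrite /eXY -sum1_card big_mkcond /= pair_big /=.
by apply: eq_bigr => -[x y] _; rewrite inE; case: ifP.
Qed.

Lemma eXY_sumL X Y : eXY E X Y = (\sum_(x in X) #|[set y in Y | E x y]|)%N.
Proof.
rewrite eXYE [RHS]big_mkcond /=; apply: eq_bigr => x _.
case: (boolP (x \in X)) => /= [_ | _]; last by rewrite big1.
by rewrite -sum1_card [RHS]big_mkcond /=; apply: eq_bigr => y _; rewrite !inE; case: ifP.
Qed.

Lemma eXY_sumR X Y : eXY E X Y = (\sum_(y in Y) #|[set x in X | E x y]|)%N.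
Proof.
rewrite eXYE exchange_big [RHS]big_mkcond /=; apply: eq_bigr => y _.
case: (boolP (y \in Y)) => /= [_ | _]; last by rewrite big1 // => x _; rewrite andbF.
rewrite -sum1_card [RHS]big_mkcond /=.
by apply: eq_bigr => x _; rewrite !inE andbT; case: ifP.
Qed.

Lemma eXY_leq_mul X Y : (eXY E X Y <= #|X| * #|Y|)%N.
Proof.
rewrite eXY_sumL -sum_nat_const; apply: leq_sum => x _.
by apply: subset_leq_card; apply/subsetP => y; rewrite inE => /andP[].
Qed.

Lemma eXY_setCr_outdeg X Y :
  (eXY E X Y + eXY E X (~: Y) = \sum_(x in X) outdeg E x)%N.
Proof.
rewrite !eXY_sumL -big_split; apply: eq_bigr => x _.
rewrite /outdeg -(cardsID Y [set u | E x u]); congr (_ + _)%N;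
  by apply: eq_card => y; rewrite !inE andbC.
Qed.

Lemma eXY_setCl_indeg X Y :
  (eXY E X Y + eXY E (~: X) Y = \sum_(y in Y) indeg E y)%N.
Proof.
rewrite !eXY_sumR -big_split; apply: eq_bigr => y _.
rewrite /indeg -(cardsID X [set u | E u y]); congr (_ + _)%N;
  by apply: eq_card => x; rewrite !inE andbC.
Qed.

Lemma eXY_setC_perturb (X Y X' Y' : {set V}) :
  (eXY E X' (~: Y') <= eXY E X (~: Y) + #|X' :\: X| * #|V| + #|Y :\: Y'| * #|V|)%N.
Proof.
rewrite /eXY; set P := [set p : V * V | _]; set Q := [set p : V * V | _].
have sub : P \subset Q :|: setX (X' :\: X) [set: V] :|: setX [set: V] (Y :\: Y').
  apply/subsetP => -[x y]; rewrite !inE /=.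
  by case: (x \in X'); case: (y \in Y'); case: (x \in X); case: (y \in Y); case: (E x y).
have := subset_leq_card sub.
have := (leq_card_setU (Q :|: setX (X' :\: X) [set: V]) (setX [set: V] (Y :\: Y'))).1.
have := (leq_card_setU Q (setX (X' :\: X) [set: V])).1.
rewrite !cardsX cardsT; lia.
Qed.

Lemma extremal_of_halves (R : realFieldType) (eps : R) (X Y : {set V}) :
  (#|X| + #|Y| = #|V|)%N -> (#|X| <= #|Y| <= #|X| + 1)%N ->
  (eXY E X (~: Y))%:R < eps * #|V|%:R ^+ 2 -> extremal E eps.
Proof.
move=> cardXY /andP [XY YX] sparse.
exists (X :\: Y), (Y :\: X), (X :&: Y), (~: (X :|: Y)).
have cardX := cardsID Y X; have cardY := cardsID X Y.
have cardU := cardsUI X Y; have cardC := cardsC (X :|: Y).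
rewrite setIC in cardY; split.
- split; last by apply/setP => x; rewrite !inE; case: (x \in X); case: (x \in Y).
  by rewrite -!setI_eq0; repeat (apply/andP; split); apply/eqP/setP => x;
    rewrite !inE; case: (x \in X); case: (x \in Y).
- lia.
- lia.
- have -> : X :\: Y :|: X :&: Y = X by rewrite setUC setID.
  have -> : X :\: Y :|: ~: (X :|: Y) = ~: Y.
    by apply/setP => x; rewrite !inE; case: (x \in X); case: (x \in Y).
  exact: sparse.
Qed.
End EdgeCounting.

Section NonExpandingSet.
Variables (R : realFieldType) (V : finType) (E : rel V) (nu : R) (S : {set V}).
Hypothesis semideg : min_semideg_ge_half R E.

Local Notation n := (#|V|%:R : R).
Local Notation RN := (RNout E nu S).

Lemma outdeg_half_le_eXY (X Y : {set V}) :
  #|X|%:R * n / 2 <= (eXY E X Y + eXY E X (~: Y))%:R.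
Proof.
rewrite eXY_setCr_outdeg natr_sum; apply: le_trans (ler_sum _ (fun x _ => (semideg x).1)).
by rewrite sumr_const -mulrA mulr_natl.
Qed.

Lemma indeg_half_le_eXY (X Y : {set V}) :
  #|Y|%:R * n / 2 <= (eXY E X Y + eXY E (~: X) Y)%:R.
Proof.
rewrite eXY_setCl_indeg natr_sum; apply: le_trans (ler_sum _ (fun y _ => (semideg y).2)).
by rewrite sumr_const -mulrA mulr_natl.
Qed.

Lemma eXY_setC_RNout : (eXY E S (~: RN))%:R <= #|~: RN|%:R * (nu * n).
Proof.
have few v : v \in ~: RN -> #|[set u in S | E u v]|%:R <= nu * n.
  by rewrite !inE -ltNge => /ltW.
rewrite eXY_sumR natr_sum -sum1_card natr_sum mulr_suml.
by apply: ler_sum => v /few; rewrite mul1r.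
Qed.

Lemma card_le_half_add : (0 < #|~: RN|)%N -> #|S|%:R <= n / 2 + nu * n.
Proof.
rewrite -(ltr0n R) => RNc_gt0.
have in_half := indeg_half_le_eXY S (~: RN).
have to_RNc := eXY_setC_RNout.
have rest : (eXY E (~: S) (~: RN))%:R <= (n - #|S|%:R) * #|~: RN|%:R.
  have -> : n - #|S|%:R = #|~: S|%:R by rewrite -(cardsC S) natrD addrAC subrr add0r.
  by rewrite -natrM ler_nat eXY_leq_mul.
rewrite natrD in in_half; nra.
Qed.

Lemma RNout_deficit : 0 <= nu -> #|S|%:R * (n / 2 - #|RN|%:R) <= n * (nu * n).
Proof.
move=> nu_ge0.
have out_half := outdeg_half_le_eXY S RN.
have to_RNc := eXY_setC_RNout.
have to_RN : (eXY E S RN)%:R <= #|S|%:R * #|RN|%:R :> R by rewrite -natrM ler_nat eXY_leq_mul.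
have RNc_le : #|~: RN|%:R <= n by rewrite ler_nat max_card.
have nun_ge0 : 0 <= nu * n by rewrite mulr_ge0.
rewrite natrD in out_half; nra.
Qed.

Lemma half_sub_RNout_le (tau : R) :
  0 < tau -> 0 <= nu -> tau * n < #|S|%:R -> n / 2 - #|RN|%:R <= nu / tau * n.
Proof.
move=> tau_gt0 nu_ge0 S_lb; have := RNout_deficit nu_ge0; set d := n / 2 - _ => deficit.
have [d_le0 | d_gt0] := lerP d 0.
  by apply: le_trans d_le0 _; rewrite mulr_ge0 // divr_ge0 // ltW.
have bound := le_trans (ler_wpM2r (ltW d_gt0) (ltW S_lb)) deficit.
have n_gt0 : 0 < n by move: d_gt0; rewrite /d; have := ler0n R #|RN|; lra.
rewrite mulrAC ler_pdivlMr // -(ler_pM2l n_gt0).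
by rewrite (_ : n * (d * tau) = tau * n * d) //; ring.
Qed.

Lemma extremal_of_nonexpanding (tau eps : R) :
  0 < tau < 1 -> 0 < eps < 1 -> 0 < nu <= eps * tau / 10 ->
  tau * n < #|S|%:R -> #|S|%:R < (1 - tau) * n -> #|RN|%:R < #|S|%:R + nu * n ->
  extremal E eps.
Proof.
move=> /andP[tau_gt0 tau_lt1] /andP[eps_gt0 eps_lt1] /andP[nu_gt0 nu_le] S_lb S_ub RN_lt.
have n_gt0 : 0 < n by have := ler0n R #|V|; nra.
have nun_ge0 : 0 <= nu * n by rewrite mulr_ge0 // ltW.
have nu_tau : nu / tau <= eps / 10 by rewrite ler_pdivrMr // mulrAC.
have RN_lt_n : #|RN|%:R < n by nra.
have RNc_gt0 : (0 < #|~: RN|)%N by move: RN_lt_n (cardsC RN); rewrite ltr_nat; lia.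
have S_le := card_le_half_add RNc_gt0.
have deficit := half_sub_RNout_le tau_gt0 (ltW nu_gt0) S_lb.
have [X [cardX XS _]] := resize_set S (leq_div #|V| 2).
have [Y [cardY _ RNY]] := resize_set RN (leq_subr (#|V| %/ 2) #|V|).
have [halves_add halves_near half_le_n n_le_half] := divn2_halves #|V|.
apply: (@extremal_of_halves _ _ _ _ X Y); rewrite ?cardX ?cardY //.
have half_le : ((#|V| %/ 2)%:R <= n / 2) * (n / 2 <= (#|V| - #|V| %/ 2)%:R).
  by rewrite ler_pdivlMr // ler_pdivrMr // mulrC -!natrM !ler_nat mulnC.
have XS_le : #|X :\: S|%:R <= nu / tau * n + nu * n.
  rewrite XS; apply: ler_natB_trunc; first by rewrite addr_ge0 // mulr_ge0 // divr_ge0 // ltW.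
  by case: half_le => ? _; lra.
have RNY_le : #|RN :\: Y|%:R <= 2 * (nu * n).
  rewrite RNY; apply: ler_natB_trunc; first by rewrite mulr_ge0.
  by case: half_le => _ ?; lra.
have SRN_le : (eXY E S (~: RN))%:R <= n * (nu * n).
  by apply: le_trans (eXY_setC_RNout) _; rewrite ler_wpM2r // ler_nat max_card.
have := eXY_setC_perturb E S RN X Y; rewrite -(ler_nat R) !natrD !natrM => /le_lt_trans; apply.
have nu_eps : nu <= eps / 10.
  have : eps * tau <= eps by rewrite ler_piMr // ltW.
  lra.
apply: (@le_lt_trans _ _ ((nu / tau + 4 * nu) * n ^+ 2)).
  have := ler_wpM2r (ler0n R #|V|) XS_le; have := ler_wpM2r (ler0n R #|V|) RNY_le.
  rewrite expr2; lra.
by rewrite ltr_pM2r ?exprn_gt0 //; lra.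
Qed.

End NonExpandingSet.

Theorem lemma4p4 (R : archiRealFieldType) :
  forall tau eps : R, 0 < tau < 1 -> 0 < eps < 1 ->
  exists nu0 : R, 0 < nu0 /\
  forall nu : R, 0 < nu <= nu0 ->
  exists N : nat, forall (V : finType) (E : rel V),
    loopless E -> (N <= #|V|)%N -> min_semideg_ge_half R E ->
    extremal E eps \/ robust_outexpander E nu tau.
Proof.
move=> tau eps tau_bd eps_bd.
have [/andP[tau_gt0 _] /andP[eps_gt0 _]] := (tau_bd, eps_bd).
exists (eps * tau / 10); split; first by rewrite divr_gt0 ?mulr_gt0.
move=> nu nu_bd; exists 0%N => V E _ _ semideg.
have [/existsP[S /and3P[S_lb S_ub]] | expander] := boolP [exists S : {set V},
    [&& tau * #|V|%:R < #|S|%:R, #|S|%:R < (1 - tau) * #|V|%:R &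
        ~~ (#|S|%:R + nu * #|V|%:R <= #|RNout E nu S|%:R)]].
  rewrite -ltNge => RN_lt; left.
  exact: (@extremal_of_nonexpanding _ V E nu S semideg tau eps)...
by right=> S S_lb S_ub; move/existsPn/(_ S): expander; rewrite S_lb S_ub negbK.
Qed.
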